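(* Let $f\in\mathbb{R}[X_1,\dots,X_n]$ be a non-constant polynomial of degree $2d$ with $f_{2d,i}>0$ for $i=1,\dots,n$. Then $f_{gp}=f_0-m^*$, where $m^*$ is the optimal value of the optimization problem $$\text{Minimize } \sum_{\alpha\in\Delta^{<2d}}(2d-|\alpha|)\left[\left(\frac{f_{\alpha}}{2d}\right)^{2d}\alpha^{\alpha}a_{\alpha}^{-\alpha}\right]^{\frac{1}{2d-|\alpha|}}$$ $$\text{subject to } \sum_{\alpha\in\Delta}\frac{a_{\alpha,i}}{f_{2d,i}}\le 1,\ i=1,\dots,n,\quad\text{and}\quad \frac{(2d)^{2d}a_{\alpha}^{\alpha}}{|f_{\alpha}|^{2d}\alpha^{\alpha}}=1,\ \alpha\in\Delta,\ |\alpha|=2d,$$ in the positive variables $a_{\alpha,i}$, $\alpha\in\Delta$, $i=1,\dots,n$, $\alpha_i\neq0$ (with $a_{\alpha,i}:=0$ when $\alpha_i=0$, and $a_\alpha=(a_{\alpha,1},\dots,a_{\alpha,n})$). Moreover this problem is a geometric program: the objective and the inequality-constraint functions are posynomials, and the equality-constraint functions are monomial functions, in these variables.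
   Context: $\mathbb{N}=\{0,1,2,\dots\}$. For $\alpha\in\mathbb{N}^n$ write $\underline{X}^\alpha=X_1^{\alpha_1}\cdots X_n^{\alpha_n}$, $|\alpha|=\sum_i\alpha_i$, and for $a\in\mathbb{R}^n$, $a^{\alpha}=\prod_i a_i^{\alpha_i}$ with $0^0=1$ ($a_\alpha^{-\alpha}$ means $1/a_\alpha^\alpha$). For $f=\sum_\alpha f_\alpha\underline{X}^\alpha$ of degree $2d$: $f_0$ constant term, $f_{2d,i}$ coefficient of $X_i^{2d}$, $\Omega=\{\alpha: f_\alpha\ne0\}\setminus\{\underline{0},2d\epsilon_1,\dots,2d\epsilon_n\}$, $\Delta=\{\alpha\in\Omega:\ f_\alpha<0\text{ or }\alpha_i\text{ odd for some }i\}$, $\Delta^{<2d}=\{\alpha\in\Delta:|\alpha|<2d\}$. $f_{gp}$ is the supremum (with $\sup\emptyset=-\infty$) of all $r\in\mathbb{R}$ for which there exist reals $a_{\alpha,i}\ge0$ ($\alpha\in\Delta$, $i=1,\dots,n$), $a_{\alpha,i}=0$ iff $\alpha_i=0$, with (1) $(2d)^{2d}a_\alpha^\alpha=|f_\alpha|^{2d}\alpha^\alpha$ for $\alpha\in\Delta$, $|\alpha|=2d$; (2) $f_{2d,i}\ge\sum_{\alpha\in\Delta}a_{\alpha,i}$ for all $i$; (3) $f_0-r\ge\sum_{\alpha\in\Delta^{<2d}}(2d-|\alpha|)\big[\frac{|f_\alpha|^{2d}\alpha^\alpha}{(2d)^{2d}a_\alpha^\alpha}\big]^{1/(2d-|\alpha|)}$.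 The optimal value $m^*$ is the infimum of the objective over the feasible set ($+\infty$ if the feasible set is empty). A monomial function on $\mathbb{R}_{>0}^N$ is $c x_1^{b_1}\cdots x_N^{b_N}$ with $c>0$, $b_j\in\mathbb{R}$; a posynomial is a finite sum of monomial functions. *)

From HB Require Import structures.
From mathcomp Require Import all_boot all_order all_algebra.
From mathcomp Require Import boolp classical_sets reals constructive_ereal ereal exp.
From mathcomp Require mpoly.

Canonical mpoly.mpoly_multinom__canonical__eqtype_SubType.
Canonical mpoly.mpoly_multinom__canonical__eqtype_Equality.
Canonical mpoly.mpoly_multinom__canonical__eqtype_SubEquality.
Canonical mpoly.mpoly_multinom__canonical__choice_Choice.
Canonical mpoly.mpoly_multinom__canonical__choice_SubChoice.
Canonical mpoly.mpoly_multinom__canonical__choice_Countable.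
Canonical mpoly.mpoly_multinom__canonical__choice_SubCountable.
Coercion mpoly.fun_of_multinom : mpoly.multinom >-> Funclass.

Set Implicit Arguments.
Unset Strict Implicit.
Unset Printing Implicit Defensive.

Import Order.TTheory GRing.Theory Num.Theory.
Local Open Scope ring_scope.

Section GP.
Variables (R : realType) (n : nat).

Notation mnm := (mpoly.multinom n).
Notation poly := (mpoly.mpoly n R).

Definition absm (a : mnm) : nat := mpoly.mdeg a.

(* total degree of f (this is (msize f).-1 ; 0 for f = 0) *)
Definition tdeg (f : poly) : nat := (\max_(m <- mpoly.msupp f) mpoly.mdeg m)%N.

Definition mnm_pure (k : nat) (i : 'I_n) : mnm :=
  mpoly.Multinom [tuple (if j == i then k else 0%N) | j < n].

Definition f0 (f : poly) : R := mpoly.mcoeff (@mpoly.mnm0 n) f.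

Definition ftop (f : poly) (d : nat) (i : 'I_n) : R :=
  mpoly.mcoeff (mnm_pure (2 * d) i) f.

Definition Omega (f : poly) (d : nat) : seq mnm :=
  [seq a : mnm <- mpoly.msupp f | (a != @mpoly.mnm0 n) &&
                            [forall i : 'I_n, a != mnm_pure (2 * d) i]].

Definition Delta (f : poly) (d : nat) : seq mnm :=
  [seq a : mnm <- Omega f d | (mpoly.mcoeff a f < 0) || [exists i : 'I_n, odd (a i)]].

Definition Delta_lt (f : poly) (d : nat) : seq mnm :=
  [seq a : mnm <- Delta f d | (absm a < 2 * d)%N].

(* a_alpha^alpha = prod_i a_{alpha,i}^{alpha_i}  (0^0 = 1) *)
Definition powa (a : mnm -> 'I_n -> R) (al : mnm) : R :=
  \prod_(i < n) (a al i) ^+ (al i).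

Definition powself (al : mnm) : R :=
  \prod_(i < n) ((al i)%:R : R) ^+ (al i).

Definition gp_bracket (f : poly) (d : nat) (a : mnm -> 'I_n -> R) (al : mnm) : R :=
  `|mpoly.mcoeff al f| ^+ (2 * d) * powself al /
    (((2 * d)%:R : R) ^+ (2 * d) * powa a al).

Definition gp_sum (f : poly) (d : nat) (a : mnm -> 'I_n -> R) : R :=
  \sum_(al <- Delta_lt f d)
    ((2 * d - absm al)%:R * powR (gp_bracket f d a al) ((2 * d - absm al)%:R)^-1).

(* f_gp : supremum (in \bar R, sup of empty set = -oo) *)
Definition fgp_admissible (f : poly) (d : nat) (r : R) : Prop :=
  exists a : mnm -> 'I_n -> R,
    [/\ (forall al i, al \in Delta f d -> 0 <= a al i),
        (forall al i, al \in Delta f d -> (a al i = 0 <-> al i = 0%N)),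
        (forall al, al \in Delta f d -> absm al = (2 * d)%N ->
            ((2 * d)%:R : R) ^+ (2 * d) * powa a al =
            `|mpoly.mcoeff al f| ^+ (2 * d) * powself al),
        (forall i, \sum_(al <- Delta f d) a al i <= ftop f d i) &
        f0 f - r >= gp_sum f d a].

Definition fgp (f : poly) (d : nat) : \bar R :=
  ereal_sup [set (r%:E)%E | r in fgp_admissible f d].

(* ---- the geometric program of Corollary 3.6 ----
   Variables a_{alpha,i}, alpha in Delta, alpha_i <> 0, represented by a
   function a : mnm -> 'I_n -> R (other entries irrelevant); the convention
   a_{alpha,i} := 0 when alpha_i = 0 is implemented by zext. *)
Definition zext (a : mnm -> 'I_n -> R) : mnm -> 'I_n -> R :=
  fun al i => if al i == 0%N then 0 else a al i.

Definition gp_pos (f : poly) (d : nat) (a : mnm -> 'I_n -> R) : Prop :=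
  forall al i, al \in Delta f d -> al i != 0%N -> 0 < a al i.

Definition gp_obj (f : poly) (d : nat) (a : mnm -> 'I_n -> R) : R :=
  \sum_(al <- Delta_lt f d)
    ((2 * d - absm al)%:R *
      powR ((mpoly.mcoeff al f / (2 * d)%:R) ^+ (2 * d) * powself al
             / powa (zext a) al)
           ((2 * d - absm al)%:R)^-1).

Definition gp_ineq (f : poly) (d : nat) (i : 'I_n) (a : mnm -> 'I_n -> R) : R :=
  \sum_(al <- Delta f d) zext a al i / ftop f d i.

Definition gp_eq (f : poly) (d : nat) (al : mnm) (a : mnm -> 'I_n -> R) : R :=
  ((2 * d)%:R : R) ^+ (2 * d) * powa (zext a) al /
    (`|mpoly.mcoeff al f| ^+ (2 * d) * powself al).

Definition gp_feasible (f : poly) (d : nat) (a : mnm -> 'I_n -> R) : Prop :=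
  [/\ gp_pos f d a,
      (forall i, gp_ineq f d i a <= 1) &
      (forall al, al \in Delta f d -> absm al = (2 * d)%N -> gp_eq f d al a = 1)].

(* optimal value m^* (inf of empty set = +oo) *)
Definition mstar (f : poly) (d : nat) : \bar R :=
  ereal_inf [set ((gp_obj f d a)%:E)%E | a in gp_feasible f d].

Definition gp_monom (f : poly) (d : nat) (b : mnm -> 'I_n -> R)
    (a : mnm -> 'I_n -> R) : R :=
  \prod_(al <- Delta f d) \prod_(i < n | al i != 0%N) powR (a al i) (b al i).

Definition is_monomial_fn (f : poly) (d : nat) (F : (mnm -> 'I_n -> R) -> R) : Prop :=
  exists c : R, exists b : mnm -> 'I_n -> R,
    0 < c /\ forall a, gp_pos f d a -> F a = c * gp_monom f d b a.

Definition is_posynomial (f : poly) (d : nat) (F : (mnm -> 'I_n -> R) -> R) : Prop :=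
  exists s : seq (R * (mnm -> 'I_n -> R)),
    all (fun p => 0 < p.1) s /\
    forall a, gp_pos f d a -> F a = \sum_(p <- s) p.1 * gp_monom f d p.2 a.

End GP.

(** Conditions (1)-(3) defining [f_gp] are, after dividing by [f_{2d,i}] and by the
    right-hand side of (1), exactly the constraints of the geometric program, while the
    left-hand side of (3) is its objective evaluated at [a] (extended by zero).  Hence
    [r] is admissible for [f_gp] iff some feasible point has objective at most [f_0 - r],
    and the supremum of such [r] is [f_0 - m^*].  The posynomial/monomial shape of the
    objective and constraints is read off from [x^{-k} = x `^ (-k)] for positive [x]. *)

From HB Require Import structures.
From mathcomp Require Import all_boot all_order all_algebra.
From mathcomp Require Import boolp classical_sets reals constructive_ereal ereal exp.
From mathcomp Require mpoly.
From mathcomp Require Import lra.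
Import Order.TTheory GRing.Theory Num.Theory.
Local Open Scope ring_scope.
Local Open Scope classical_set_scope.

Lemma ereal_sup_sub_ereal_inf (R : realType) (c : R) (S : set R) :
  ereal_sup [set r%:E | r in [set r | exists2 x, S x & x <= c - r]] =
  (c%:E - ereal_inf [set x%:E | x in S])%E.
Proof.
apply/eqP; rewrite eq_le; apply/andP; split.
- apply: ge_ereal_sup => _ [r [x Sx xle] <-].
  have : (ereal_inf [set x%:E | x in S] <= x%:E)%E.
    by apply: ereal_inf_lbound; exists x.
  case: ereal_inf => [y||] //=; last by rewrite leey.
  by rewrite !lee_fin; lra.
- have : (c%:E - ereal_sup [set r%:E | r in [set r | exists2 x, S x & (x <= c - r)%R]]
          <= ereal_inf [set x%:E | x in S])%E.
    apply: le_ereal_inf_tmp => _ [x Sx <-].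
    have : ((c - x)%R%:E <=
            ereal_sup [set r%:E | r in [set r | exists2 x, S x & (x <= c - r)%R]])%E.
      by apply: ereal_sup_ubound; exists (c - x)%R => //; exists x => //; lra.
    case: ereal_sup => [y||] //=; last by rewrite leNye.
    by rewrite !lee_fin; lra.
  case: ereal_sup => [y||]; case: ereal_inf => [z||] //=.
  + by rewrite !lee_fin; lra.
  + by rewrite leNye.
  + by rewrite leey.
Qed.

Lemma powR_prod (R : realType) (I : Type) (s : seq I) (P : pred I) (F : I -> R) (r : R) :
  (forall i, P i -> 0 <= F i) ->
  (\prod_(i <- s | P i) F i) `^ r = \prod_(i <- s | P i) F i `^ r.
Proof.
move=> F_ge0; elim: s => [|i s IHs]; first by rewrite !big_nil powR1.
rewrite !big_cons; case: ifP => // Pi.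
by rewrite powRM ?F_ge0 ?IHs ?prodr_ge0.
Qed.

Lemma powself_gt0 (R : realType) (n : nat) (al : mpoly.multinom n) : 0 < powself R al.
Proof.
apply: prodr_gt0 => i _; case: (al i) => [|k]; first by rewrite expr0.
by rewrite exprn_gt0 ?ltr0n.
Qed.

Section GeometricProgram.
Variables (R : realType) (n d : nat) (f : mpoly.mpoly n R).

Local Notation mnm := (mpoly.multinom n).
Local Notation Delta := (Delta f d).
Local Notation coef al := (mpoly.mcoeff al f).

Lemma Delta_uniq : uniq Delta.
Proof. by rewrite /Delta /Omega !filter_uniq // mpoly.msupp_uniq. Qed.

Lemma mcoeff_Delta_neq0 al : al \in Delta -> coef al != 0.
Proof.
by rewrite /Delta /Omega !mem_filter -mpoly.mcoeff_msupp => /andP[_ /andP[_]].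
Qed.

Lemma mem_Delta_lt al : (al \in Delta_lt f d) = (al \in Delta) && (absm al < 2 * d)%N.
Proof. by rewrite /Delta_lt mem_filter andbC. Qed.

Lemma gp_coef_gt0 al : al \in Delta ->
  0 < (coef al / (2 * d)%:R) ^+ (2 * d) * powself R al.
Proof.
move=> Dal; rewrite mulr_gt0 ?powself_gt0 // exprn_even_gt0 ?oddM //.
have [->|d_gt0] := posnP d; first by rewrite muln0.
by rewrite mulf_neq0 ?mcoeff_Delta_neq0 ?invr_eq0 ?pnatr_eq0 -?lt0n ?muln_gt0 ?d_gt0 ?orbT.
Qed.

Lemma gp_bracketE a al :
  gp_bracket f d a al = (coef al / (2 * d)%:R) ^+ (2 * d) * powself R al / powa a al.
Proof.
rewrite /gp_bracket expr_div_n -normrX ger0_norm ?exprn_even_ge0 ?oddM //.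
by rewrite !invfM !mulrA; congr (_ * _); rewrite mulrAC.
Qed.

Lemma gp_obj_zext a : gp_obj f d a = gp_sum f d (zext a).
Proof. by apply: eq_bigr => al _; rewrite gp_bracketE. Qed.

Lemma gp_sum_eq_Delta a b : {in Delta, a =1 b} -> gp_sum f d a = gp_sum f d b.
Proof.
move=> eq_ab; apply: eq_big_seq => al; rewrite mem_Delta_lt => /andP[Dal _].
by rewrite /gp_bracket /powa eq_ab.
Qed.

Lemma zext_id (a : mnm -> 'I_n -> R) (al : mnm) :
  (forall i, a al i = 0 <-> al i = 0%N) -> zext a al = a al.
Proof. by move=> a0; apply/funext => i; rewrite /zext; case: eqP => // /a0. Qed.

Lemma gp_eq1P a al : al \in Delta ->
  gp_eq f d al a = 1 <->
  (2 * d)%:R ^+ (2 * d) * powa (zext a) al = `|coef al| ^+ (2 * d) * powself R al.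
Proof.
move=> Dal; rewrite /gp_eq; split => [/divr1_eq //|->]; apply: divff.
by rewrite mulf_neq0 ?expf_neq0 ?normr_eq0 ?mcoeff_Delta_neq0 ?gt_eqF ?powself_gt0.
Qed.

Section PositiveTop.
Hypothesis ftop_gt0 : forall i, 0 < ftop f d i.

Lemma gp_ineq_le1 a i :
  (gp_ineq f d i a <= 1) = (\sum_(al <- Delta) zext a al i <= ftop f d i).
Proof. by rewrite /gp_ineq -mulr_suml ler_pdivrMr // mul1r. Qed.

Lemma fgp_admissible_feasible r : fgp_admissible f d r ->
  exists2 a, gp_feasible f d a & gp_obj f d a <= f0 f - r.
Proof.
case=> a [a_ge0 a0 top_eq sum_le gp_sum_le].
have zext_a : {in Delta, zext a =1 a} by move=> al Dal; apply: zext_id => i; exact: a0.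
exists a; last by rewrite gp_obj_zext (gp_sum_eq_Delta _ _ zext_a).
split.
- move=> al i Dal al_i; rewrite lt_def a_ge0 // andbT.
  by apply: contra al_i => /eqP /(a0 _ _ Dal) ->.
- by move=> i; rewrite gp_ineq_le1 (eq_big_seq (a^~ i)) // => al Dal; rewrite zext_a.
- by move=> al Dal deg_al; apply/gp_eq1P => //; rewrite /powa zext_a // top_eq.
Qed.

Lemma feasible_fgp_admissible a r : gp_feasible f d a ->
  gp_obj f d a <= f0 f - r -> fgp_admissible f d r.
Proof.
case=> a_pos ineq eq1 obj_le; exists (zext a); split.
- by move=> al i Dal; rewrite /zext; case: eqP => // /eqP al_i; apply/ltW/a_pos.
- move=> al i Dal; rewrite /zext; case: eqP => // /eqP al_i.
  split=> [a_i | /eqP]; last by rewrite (negbTE al_i).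
  by have := a_pos _ _ Dal al_i; rewrite a_i ltxx.
- by move=> al Dal deg_al; apply/gp_eq1P/eq1.
- by move=> i; rewrite -gp_ineq_le1.
- by rewrite -gp_obj_zext.
Qed.

Lemma fgp_admissibleE : fgp_admissible f d =
  [set r | exists2 x, [set gp_obj f d a | a in gp_feasible f d] x & x <= f0 f - r].
Proof.
apply/seteqP; split => r.
- by case/fgp_admissible_feasible => a feas_a obj_le; exists (gp_obj f d a) => //; exists a.
- by case=> _ [a feas_a <-]; apply: feasible_fgp_admissible.
Qed.

End PositiveTop.

Lemma gp_monom_at al e a : al \in Delta ->
  gp_monom f d (fun al' j => if al' == al then e j else 0) a =
  \prod_(j < n | al j != 0%N) a al j `^ e j.
Proof.
move=> Dal; rewrite /gp_monom (bigD1_seq al) ?Delta_uniq //= eqxx.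
rewrite [X in _ * X]big1 ?mulr1 // => al' /negbTE ->.
by apply: big1 => j _; rewrite powRr0.
Qed.

Lemma powa_zextE a al : gp_pos f d a -> al \in Delta ->
  powa (zext a) al = \prod_(j < n | al j != 0%N) a al j `^ (al j)%:R.
Proof.
move=> a_pos Dal; rewrite /powa [RHS]big_mkcond; apply: eq_bigr => j _ /=.
rewrite /zext; case: eqP => [->|/eqP al_j]; first by rewrite expr0.
by rewrite powR_mulrn ?(ltW (a_pos _ _ Dal al_j)).
Qed.

Lemma powR_powa_zext a al t : gp_pos f d a -> al \in Delta ->
  powa (zext a) al `^ t = \prod_(j < n | al j != 0%N) a al j `^ ((al j)%:R * t).
Proof.
move=> a_pos Dal; rewrite powa_zextE // powR_prod => [|j _]; last exact: powR_ge0.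
by apply: eq_bigr => j _; rewrite powRrM.
Qed.

Lemma gp_obj_posynomial : is_posynomial f d (gp_obj f d).
Proof.
pose m (al : mnm) : R := (2 * d - absm al)%:R.
pose X al := (coef al / (2 * d)%:R) ^+ (2 * d) * powself R al.
exists [seq (m al * X al `^ (m al)^-1,
             fun al' j => if al' == al then (al j)%:R * (-1 * (m al)^-1) else 0)
       | al <- Delta_lt f d].
split.
- rewrite all_map; apply/allP => al; rewrite mem_Delta_lt => /andP[Dal deg_lt] /=.
  by rewrite mulr_gt0 ?ltr0n ?subn_gt0 ?powR_gt0 ?gp_coef_gt0.
- move=> a a_pos; rewrite big_map; apply: eq_big_seq => al.
  rewrite mem_Delta_lt => /andP[Dal _] /=.
  rewrite gp_monom_at // -/(X al) -/(m al) -mulrA -powR_powa_zext // powRrM.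
  have powa_gt0 : 0 < powa (zext a) al.
    by rewrite powa_zextE // prodr_gt0 // => j al_j; rewrite powR_gt0 ?a_pos.
  by rewrite powR_inv1 ?ltW // powRM ?invr_ge0 ?ltW ?gp_coef_gt0.
Qed.

Lemma gp_ineq_posynomial i : 0 < ftop f d i -> is_posynomial f d (gp_ineq f d i).
Proof.
move=> top_gt0.
exists [seq ((ftop f d i)^-1, fun al' j => if al' == al then (j == i)%:R else 0)
       | al <- [seq al : mnm <- Delta | al i != 0%N]].
split; first by rewrite all_map; apply/allP => al _ /=; rewrite invr_gt0.
move=> a a_pos; rewrite big_map big_filter /gp_ineq [RHS]big_mkcond /=.
apply: eq_big_seq => al Dal; rewrite /zext; case: eqP => [_|/eqP al_i] /=.
  by rewrite mul0r.
rewrite gp_monom_at // (bigD1 i) //= eqxx big1 => [|j /andP[_ /negbTE ->]].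
  by rewrite mulr1 powRr1 ?(ltW (a_pos _ _ Dal al_i)) // mulrC.
by rewrite powRr0.
Qed.

Lemma gp_eq_monomial al : al \in Delta -> is_monomial_fn f d (gp_eq f d al).
Proof.
move=> Dal.
exists ((2 * d)%:R ^+ (2 * d) / (`|coef al| ^+ (2 * d) * powself R al)).
exists (fun al' j => if al' == al then (al j)%:R else 0).
split.
- have top_gt0 : 0 < ((2 * d)%:R : R) ^+ (2 * d).
    by rewrite -natrX ltr0n expn_gt0; case: d.
  by rewrite divr_gt0 // mulr_gt0 ?powself_gt0 // exprn_gt0 // normr_gt0 mcoeff_Delta_neq0.
- by move=> a a_pos; rewrite gp_monom_at // /gp_eq mulrAC (powa_zextE _ _ a_pos Dal).
Qed.

End GeometricProgram.

Theorem corollary3p6 (R : realType) (n d : nat) (f : mpoly.mpoly n R) :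
  (0 < tdeg f)%N ->
  tdeg f = (2 * d)%N ->
  (forall i : 'I_n, 0 < ftop f d i) ->
  [/\ fgp f d = ((f0 f)%:E - mstar f d)%E,
      is_posynomial f d (gp_obj f d),
      (forall i : 'I_n, is_posynomial f d (gp_ineq f d i)) &
      (forall al, al \in Delta f d -> absm al = (2 * d)%N ->
         is_monomial_fn f d (gp_eq f d al))].
Proof.
move=> _ _ ftop_gt0; split.
- by rewrite /fgp fgp_admissibleE // ereal_sup_sub_ereal_inf /mstar image_comp.
- exact: gp_obj_posynomial.
- by move=> i; apply: gp_ineq_posynomial.
- by move=> al Dal _; apply: gp_eq_monomial.
Qed.
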